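(* Let $\Lambda=T_1\sqcup\cdots\sqcup T_m$ be a partition of $\Lambda$ into pairwise disjoint tilings $T_1,\dots,T_m$. Then for every $S\subseteq\{1,\dots,m\}$, the set $T_S=\bigcup_{s\in S}T_s$ is a tiling.
   Context: Fix an integer $n\ge 3$ and write $[n]=\{1,\dots,n\}$. Let $\Lambda$ be the set of 3-element subsets of $[n]$; a triple $\{i,j,k\}$ with $i<j<k$ is written $ijk$. For a 4-element subset $F=\{i<j<k<l\}$ of $[n]$, the stick of $F$ is the sequence $(ijk,\ ijl,\ ikl,\ jkl)$. A tiling (the inversion set of a rhombus tiling of the zonogon $Z(n;2)$) is a subset $T\subseteq\Lambda$ such that for every 4-element $F\subseteq[n]$, $T\cap\mathrm{stick}(F)$ is an initial segment or a final segment of the stick (empty set and whole stick allowed). *)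

From mathcomp Require Import all_boot.
Set Implicit Arguments. Unset Strict Implicit. Unset Printing Implicit Defensive.

(* [n] is modelled by 'I_n (element i of 'I_n stands for i+1). *)

Definition Lambda (n : nat) : {set {set 'I_n}} := [set A : {set 'I_n} | #|A| == 3].

Definition stick (n : nat) (i j k l : 'I_n) : seq {set 'I_n} :=
  [:: [set i; j; k]; [set i; j; l]; [set i; k; l]; [set j; k; l]].

Definition is_initial_segment (T : finType) (X : {set T}) (s : seq T) : Prop :=
  exists a : nat, X = [set x in take a s].

Definition is_final_segment (T : finType) (X : {set T}) (s : seq T) : Prop :=
  exists a : nat, X = [set x in drop a s].

Definition tiling (n : nat) (T : {set {set 'I_n}}) : Prop :=
  T \subset Lambda n /\
  forall i j k l : 'I_n, i < j -> j < k -> k < l ->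
    let st := stick i j k l in
    is_initial_segment (T :&: [set x in st]) st \/
    is_final_segment (T :&: [set x in st]) st.

From mathcomp Require Import all_boot.

Set Implicit Arguments.
Unset Strict Implicit.
Unset Printing Implicit Defensive.

(* Each block T_s meets a stick in an initial or a final segment, so every
   block meeting the stick contains its first or its last triple. As the
   blocks are disjoint, only the two blocks of these end triples meet the
   stick, and the union of the blocks in S meets it in nothing, in
   everything, or exactly as one of these two blocks does. *)

Section EndSegments.

Variable U : finType.

Definition initial_or_final_segment (X : {set U}) (s : seq U) : Prop :=
  is_initial_segment (X :&: [set x in s]) s \/
  is_final_segment (X :&: [set x in s]) s.

Lemma initial_or_final_segment_eq_in (X Y : {set U}) s :
  {in s, X =i Y} -> initial_or_final_segment X s -> initial_or_final_segment Y s.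
Proof.
move=> eqXY; rewrite /initial_or_final_segment.
suff -> : Y :&: [set x in s] = X :&: [set x in s] by [].
apply/setP => y; rewrite !inE.
by case: (boolP (y \in s)) => [/eqXY -> | _]; rewrite ?andbF.
Qed.

Lemma initial_or_final_segment0 s : initial_or_final_segment set0 s.
Proof. by left; exists 0; rewrite set0I take0; apply/setP => x; rewrite !inE. Qed.

Lemma initial_or_final_segmentT s : initial_or_final_segment setT s.
Proof. by left; exists (size s); rewrite setTI take_size. Qed.

Lemma initial_segment_mem_head (X : {set U}) x s y :
  is_initial_segment (X :&: [set z in x :: s]) (x :: s) ->
  y \in X -> y \in x :: s -> x \in X.
Proof.
case=> a defX yX ys.
suff : x \in X :&: [set z in x :: s] by rewrite inE => /andP[].
have : y \in X :&: [set z in x :: s] by rewrite !inE yX.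
by rewrite defX !inE; case: a {defX} => [|a] /=; rewrite ?inE ?eqxx.
Qed.

Lemma final_segment_mem_last (X : {set U}) x s y :
  is_final_segment (X :&: [set z in x :: s]) (x :: s) ->
  y \in X -> y \in x :: s -> last x s \in X.
Proof.
case=> a defX yX ys.
suff : last x s \in X :&: [set z in x :: s] by rewrite inE => /andP[].
have : y \in X :&: [set z in x :: s] by rewrite !inE yX.
rewrite defX !inE; case def_t: (drop a (x :: s)) => [//|z t] _.
have /= -> : last x (x :: s) = last z t.
  by rewrite -[x :: s in LHS](cat_take_drop a) last_cat def_t.
exact: mem_last.
Qed.

Variables (I : finType) (T : I -> {set U}).
Hypothesis T_disjoint : forall i j, i != j -> [disjoint T i & T j].

Lemma mem_blocks_eq i j y : y \in T i -> y \in T j -> i = j.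
Proof.
by move=> yi yj; apply/eqP; apply: contraLR yj => /T_disjoint/disjointFr/(_ yi) ->.
Qed.

Lemma initial_or_final_segment_bigcup s (S : {set I}) :
  {subset s <= \bigcup_i T i} ->
  (forall i, initial_or_final_segment (T i) s) ->
  initial_or_final_segment (\bigcup_(i in S) T i) s.
Proof.
case: s => [|x s] s_cover T_seg.
  exact: initial_or_final_segment_eq_in (initial_or_final_segment0 _).
have [i0 _ x_i0] := bigcupP (s_cover x (mem_head x s)).
have [i1 _ last_i1] := bigcupP (s_cover _ (mem_last x s)).
have end_blocks j y : y \in x :: s -> y \in T j -> j = i0 \/ j = i1.
  move=> ys yj; case: (T_seg j) => [/initial_segment_mem_head | /final_segment_mem_last].
  - by move=> /(_ y yj ys) /mem_blocks_eq /(_ x_i0); left.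
  - by move=> /(_ y yj ys) /mem_blocks_eq /(_ last_i1); right.
have cover_ends y : y \in x :: s -> (y \in T i0) || (y \in T i1).
  move=> ys; have [j _ yj] := bigcupP (s_cover y ys).
  by case: (end_blocks j y ys yj) => <-; rewrite yj ?orbT.
have mem_union y : y \in x :: s ->
    (y \in \bigcup_(i in S) T i) = (i0 \in S) && (y \in T i0) || (i1 \in S) && (y \in T i1).
  move=> ys; apply/bigcupP/idP => [[j jS yj] | /orP[/andP[i0S yi0] | /andP[i1S yi1]]].
  - by case: (end_blocks j y ys yj) => <-; rewrite jS yj ?orbT.
  - by exists i0.
  - by exists i1.
case i0S: (i0 \in S); case i1S: (i1 \in S);
  [ apply: initial_or_final_segment_eq_in (initial_or_final_segmentT _)
  | apply: initial_or_final_segment_eq_in (T_seg i0)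
  | apply: initial_or_final_segment_eq_in (T_seg i1)
  | apply: initial_or_final_segment_eq_in (initial_or_final_segment0 _) ];
  by move=> y ys; rewrite mem_union // i0S i1S /= ?orbF ?inE ?cover_ends.
Qed.

End EndSegments.

Lemma card_set3 (T : finType) (a b c : T) :
  a != b -> a != c -> b != c -> #|[set a; b; c]| = 3.
Proof.
move=> ab ac bc; rewrite setUC !cardsU1 cards1 !inE.
by rewrite negb_or ab ![c == _]eq_sym ac bc.
Qed.

Lemma stick_sub_Lambda n (i j k l : 'I_n) :
  i < j -> j < k -> k < l -> {subset stick i j k l <= Lambda n}.
Proof.
move=> ij jk kl; have ik := ltn_trans ij jk; have jl := ltn_trans jk kl.
have il := ltn_trans ik kl.
have ne (a b : 'I_n) : a < b -> a != b by move=> ab; apply/eqP => e; rewrite e ltnn in ab.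
by move=> A; rewrite /stick /Lambda !inE => /or4P[] /eqP ->; rewrite card_set3 ?ne.
Qed.

Theorem lemma2 (n m : nat) (T : 'I_m -> {set {set 'I_n}}) :
  3 <= n ->
  (forall s, tiling (T s)) ->
  (forall s t, s != t -> [disjoint T s & T t]) ->
  \bigcup_(s < m) T s = Lambda n ->
  forall S : {set 'I_m}, tiling (\bigcup_(s in S) T s).
Proof.
move=> _ T_tiling T_disjoint T_cover S; split.
  by rewrite -T_cover; apply/bigcupsP => s _; apply: bigcup_sup.
move=> i j k l ij jk kl /=.
apply: initial_or_final_segment_bigcup => // [A /(stick_sub_Lambda ij jk kl)|s].
  by rewrite T_cover.
exact: (T_tiling s).2.
Qed.
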